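(* Let $G$ be a finite graph with node set $V(G)$, at least one edge, and maximal degree $\deg G=\max_{u\in V(G)}|N_G(u)|$. Let $O:\mathbb{R}^{V(G)}\times\mathbb{R}^{V(G)}\to\mathbb{R}^{V(G)}$ be a transition function that is local, i.e. for every node $u$ the component $O(o,d)_u$ depends only on $(o_w)_{w\in N_G(u)\cup\{u\}}$ and on $d_u$, and that satisfies, for constants $C_s>0$, $C_d>0$, $0<\alpha\le 1$, $$\|O(o,d)-O(o',d')\|_1\le C_s\|o-o'\|_1+C_d\|d-d'\|_1^{\alpha}\quad\text{for all }o,o',d,d'\in\mathbb{R}^{V(G)},$$ with $C_s<1/(\deg G+1)$. For $D\in\mathbb{R}^{V(G)}$ let $O(D)$ denote the steady-state observable, i.e. the unique fixed point of $O(\cdot,D)$. Let $D\in\mathbb{R}^{V(G)}$ be a (constant/mean) demand pattern, fix a node $v$ and $a>0$, and let $A\in\mathbb{R}^{V(G)}$ be the anomaly at $v$ given by $A_w=\delta_{vw}a$. Then for every node $w$, $$|O(D)_w-O(D+A)_w|\ \begin{cases}=0,& d_G(w,v)=\infty,\\[2pt] <\dfrac{C_d\,a^{\alpha}\,\big(C_s(\deg G+1)\big)^{d_G(v,w)}}{1-C_s(\deg G+1)},&\text{otherwise.}\end{cases}$$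
   Context: $N_G(u)$ is the set of neighbours of $u$ in $G$; $d_G(u,v)$ is the length of a shortest path in $G$ connecting $u$ and $v$ ($=\infty$ if no such path exists); $\delta_{vw}$ is the Kronecker delta; $\|\cdot\|_1$ is the $\ell^1$-norm. Since $C_s<1$, $O(\cdot,D)$ is a contraction, so the fixed point $O(D)$ exists and is unique. *)

From HB Require Import structures.
From mathcomp Require Import all_boot all_order all_algebra.
From mathcomp Require Import all_classical all_reals exp.
Set Implicit Arguments. Unset Strict Implicit. Unset Printing Implicit Defensive.
Import Order.TTheory GRing.Theory Num.Theory.
Local Open Scope ring_scope.

Definition simple_graph (T : finType) (e : rel T) : Prop :=
  symmetric e /\ irreflexive e.

Definition maxdeg (T : finType) (e : rel T) : nat :=
  (\max_(u : T) #|[set w | e u w]|)%N.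

Fixpoint reach_in (T : finType) (e : rel T) (k : nat) (u v : T) : bool :=
  if k is k'.+1 then (u == v) || [exists w, e u w && reach_in e k' w v]
  else u == v.

Definition is_dist (T : finType) (e : rel T) (u v : T) (k : nat) : Prop :=
  reach_in e k u v /\ forall j, (j < k)%N -> ~~ reach_in e j u v.

Definition dist_inf (T : finType) (e : rel T) (u v : T) : Prop :=
  forall k, ~~ reach_in e k u v.

Definition l1 (R : realType) (T : finType) (x : T -> R) : R :=
  \sum_(u : T) `|x u|.

From HB Require Import structures.
From mathcomp Require Import all_boot all_order all_algebra.
From mathcomp Require Import all_classical all_reals exp.
From mathcomp Require Import lra.
Set Implicit Arguments. Unset Strict Implicit. Unset Printing Implicit Defensive.
Import Order.TTheory GRing.Theory Num.Theory.
Local Open Scope ring_scope.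

(* Let d u := |O(D)_u - O(D+A)_u| and c := C_s (deg G + 1) < 1.  Applied to the two
   steady states, the Lipschitz bound gives ||O(D) - O(D+A)||_1 <= C_d a^alpha / (1 - C_s).
   Locality compares the steady states at u <> v through a hybrid observable that agrees
   with O(D+A) only on the closed neighbourhood of u, so d u <= c * max_{N[u]} d.
   Iterating along the distance k to v gives d w <= c^k C_d a^alpha / (1 - C_s), which is
   strictly below the claim since C_s < c (G has an edge); on the nodes from which v is
   unreachable, the contraction at a maximiser of d forces d = 0. *)

Section Graphs.
Variables (T : finType) (e : rel T).

Lemma reach_in_rcons j v x u :
  reach_in e j v x -> e x u -> reach_in e j.+1 v u.
Proof.
elim: j v => [|j IHj] v /=.
  by move=> /eqP -> exu; apply/orP; right; apply/existsP; exists u; rewrite exu eqxx.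
case/orP => [/eqP -> | /existsP [w /andP [evw rwx]]] exu.
  by apply/orP; right; apply/existsP; exists u; rewrite exu eqxx.
by apply/orP; right; apply/existsP; exists w; rewrite evw; exact: IHj rwx exu.
Qed.

Lemma card_nbhd_le_maxdeg u : (#|[set w | e u w]| <= maxdeg e)%N.
Proof. exact: (@leq_bigmax _ (fun u => #|[set w | e u w]|)). Qed.

Lemma maxdeg_gt0 u w : e u w -> (0 < maxdeg e)%N.
Proof.
move=> euw; apply: leq_trans (card_nbhd_le_maxdeg u).
by rewrite card_gt0; apply/set0Pn; exists w; rewrite inE.
Qed.

End Graphs.

Section L1Norm.
Variables (R : realType) (T : finType).
Implicit Types f g : T -> R.

Lemma norm_le_l1 f u : `|f u| <= l1 f.
Proof. by rewrite /l1 (bigD1 u) //= lerDl sumr_ge0. Qed.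

Lemma l1_supp1 f u : (forall x, x != u -> f x = 0) -> l1 f = `|f u|.
Proof.
by move=> f0; rewrite /l1 (bigD1 u) //= big1 ?addr0 // => x /f0 ->; rewrite normr0.
Qed.

Lemma sum_closed_nbhd_le (e : rel T) g u M :
  (forall x, 0 <= g x) -> (forall x, (x == u) || e u x -> g x <= M) ->
  \sum_(x | (x == u) || e u x) g x <= (maxdeg e).+1%:R * M.
Proof.
move=> g0 gM; have M0 : 0 <= M by apply: le_trans (g0 u) (gM u _); rewrite eqxx.
rewrite big_mkcond /=.
apply: (@le_trans _ _ (\sum_x ((if x == u then g x else 0) + (if e u x then M else 0)))).
  apply: ler_sum => x _; case: (eqVneq x u) => [->|_] /=.
    by have := g0 u; case: (e u u); lra.
  by case eux: (e u x); rewrite ?addr0 // add0r; apply: gM; rewrite eux orbT.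
rewrite big_split /= -big_mkcond big_pred1_eq -big_mkcond sumr_const -cardsE.
rewrite -addn1 natrD mulrDl mul1r addrC.
apply: lerD; last by apply: gM; rewrite eqxx.
by rewrite -[M *+ _]mulr_natl; apply: ler_wpM2r => //; rewrite ler_nat card_nbhd_le_maxdeg.
Qed.

End L1Norm.

Section SteadyStates.
Variables (R : realType) (T : finType) (e : rel T).
Variables (O : (T -> R) -> (T -> R) -> (T -> R)) (Cs Cd alpha : R).
Hypothesis O_local : forall (u : T) (o o' d d' : T -> R),
  (forall w, (w == u) || e u w -> o w = o' w) -> d u = d' u -> O o d u = O o' d' u.
Hypothesis O_lipschitz : forall o o' d d' : T -> R,
  l1 (fun u => O o d u - O o' d' u)
    <= Cs * l1 (fun u => o u - o' u) + Cd * powR (l1 (fun u => d u - d' u)) alpha.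
Hypothesis Cs_ge0 : 0 <= Cs.

Variables (o1 o2 d1 d2 : T -> R).
Hypotheses (o1_fix : O o1 d1 = o1) (o2_fix : O o2 d2 = o2).

Lemma steady_l1_le : Cs < 1 ->
  l1 (fun u => o1 u - o2 u) <= Cd * powR (l1 (fun u => d1 u - d2 u)) alpha / (1 - Cs).
Proof.
move=> Cs_lt1; rewrite ler_pdivlMr ?subr_gt0 //.
by have := O_lipschitz o1 o2 d1 d2; rewrite o1_fix o2_fix; lra.
Qed.

(* Compare O(o1, d1) at u with O(o', d'), where o' agrees with o2 on the closed
   neighbourhood of u and with o1 elsewhere; by locality O(o', d') u = o2 u. *)
Lemma steady_local_le u :
  `|o1 u - o2 u| <= Cs * \sum_(x | (x == u) || e u x) `|o1 x - o2 x|
                    + Cd * powR `|d1 u - d2 u| alpha.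
Proof.
pose o' x := if (x == u) || e u x then o2 x else o1 x.
pose d' x := if x == u then d2 x else d1 x.
have -> : o2 u = O o' d' u.
  by rewrite -{1}o2_fix; apply: O_local => [x nx|]; rewrite /o' /d' ?nx ?eqxx.
rewrite -{1}o1_fix.
apply: (le_trans (norm_le_l1 (fun x => O o1 d1 x - O o' d' x) u)).
apply: (le_trans (O_lipschitz _ _ _ _)); apply: lerD.
  rewrite ler_wpM2l // /l1 [leRHS]big_mkcond /=; apply: ler_sum => x _.
  by rewrite /o'; case: ifP => _ //; rewrite subrr normr0.
rewrite (@l1_supp1 _ _ _ u) /d' ?eqxx // => x /negbTE ->.
by rewrite subrr.
Qed.

End SteadyStates.

Section Decay.
Variables (R : realType) (T : finType) (e : rel T) (v : T) (c : R) (d : T -> R).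
Hypotheses (d_ge0 : forall x, 0 <= d x) (c_ge0 : 0 <= c).
Hypothesis d_contract : forall u (M : R), u != v -> 0 <= M ->
  (forall x, (x == u) || e u x -> d x <= M) -> d u <= c * M.

Lemma contract_dist_inf_eq0 w : c < 1 -> dist_inf e w v -> d w = 0.
Proof.
move=> c_lt1 w_inf; pose S := [pred u | `[< dist_inf e u v >]].
have Sw : S w by apply/asboolP.
case: (arg_maxP d Sw) => u /asboolP u_inf u_max.
have S_closed x : (x == u) || e u x -> S x.
  case/orP => [/eqP -> | eux]; apply/asboolP => // k; apply/negP => rxv.
  have /negP := u_inf k.+1; apply; apply/orP; right.
  by apply/existsP; exists x; rewrite eux.
have du_le : d u <= c * d u.
  apply: d_contract => [||x /S_closed /u_max //]; last exact: d_ge0.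
  exact: (u_inf 0%N).
have du_le0 : d u <= 0 by have := d_ge0 u; nra.
by apply/eqP; rewrite eq_le d_ge0 andbT (le_trans (u_max w Sw)).
Qed.

Lemma contract_far_le B k u : symmetric e -> (forall x, d x <= B) ->
  (forall j, (j < k)%N -> ~~ reach_in e j v u) -> d u <= c ^+ k * B.
Proof.
move=> e_sym d_leB; elim: k u => [|k IHk] u far; first by rewrite mul1r.
rewrite exprS -mulrA; apply: d_contract.
- by have := far 0%N isT; rewrite /= eq_sym.
- by rewrite mulr_ge0 ?exprn_ge0 // (le_trans (d_ge0 u)).
- move=> x /orP [/eqP -> | eux]; apply: IHk => j ltjk; first exact: far (leqW ltjk).
  apply/negP => rvx; have /negP := far j.+1 ltjk; apply.
  by apply: reach_in_rcons rvx _; rewrite e_sym.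
Qed.

End Decay.

Theorem theorem1 (R : realType) (T : finType) (e : rel T)
    (O : (T -> R) -> (T -> R) -> (T -> R))
    (Cs Cd alpha : R) (D : T -> R) (v : T) (a : R)
    (oD oDA : T -> R) :
  simple_graph e ->
  (exists u w, e u w) ->
  (forall (u : T) (o o' d d' : T -> R),
      (forall w, (w == u) || e u w -> o w = o' w) -> d u = d' u ->
      O o d u = O o' d' u) ->
  0 < Cs -> 0 < Cd -> 0 < alpha -> alpha <= 1 ->
  (forall o o' d d' : T -> R,
      l1 (fun u => O o d u - O o' d' u)
        <= Cs * l1 (fun u => o u - o' u)
           + Cd * powR (l1 (fun u => d u - d' u)) alpha) ->
  Cs < ((maxdeg e).+1%:R)^-1 ->
  0 < a ->
  O oD D = oD ->
  O oDA (fun w => D w + (if w == v then a else 0)) = oDA ->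
  forall w : T,
    (dist_inf e w v -> `|oD w - oDA w| = 0) /\
    (forall k, is_dist e v w k ->
       `|oD w - oDA w|
         < Cd * powR a alpha * (Cs * (maxdeg e).+1%:R) ^+ k
           / (1 - Cs * (maxdeg e).+1%:R)).
Proof.
move=> [e_sym _] [u0 [w0 eu0w0]] O_local Cs_gt0 Cd_gt0 alpha_gt0 _ O_lip Cs_lt a_gt0
  oD_fix oDA_fix w.
set DA := fun w => D w + _ in oDA_fix; set c := Cs * _; set X := Cd * _.
pose d x : R := `|oD x - oDA x|.
have c_lt1 : c < 1 by rewrite /c -ltr_pdivlMr ?ltr0n // div1r.
have Cs_lt_c : Cs < c by rewrite /c ltr_pMr // ltr1n ltnS (maxdeg_gt0 eu0w0).
have X_gt0 : 0 < X by rewrite mulr_gt0 ?powR_gt0.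
have demand_gap x : D x - DA x = - (if x == v then a else 0).
  by rewrite /DA opprD addrA subrr sub0r.
have d_ge0 x : 0 <= d x by exact: normr_ge0.
have d_le x : d x <= X / (1 - Cs).
  apply: le_trans (norm_le_l1 (fun x => oD x - oDA x) x) _.
  apply: le_trans (steady_l1_le O_lip oD_fix oDA_fix _) _; first lra.
  rewrite (@l1_supp1 _ _ _ v) => [|y /negbTE yv]; last by rewrite demand_gap yv oppr0.
  by rewrite demand_gap eqxx normrN gtr0_norm.
have d_contract u (M : R) : u != v -> 0 <= M ->
    (forall x, (x == u) || e u x -> d x <= M) -> d u <= c * M.
  move=> uv M0 dM; rewrite {1}/d.
  apply: le_trans (steady_local_le O_local O_lip (ltW Cs_gt0) oD_fix oDA_fix u) _.
  rewrite demand_gap (negbTE uv) oppr0 normr0 powR0 ?gt_eqF // mulr0 addr0.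
  rewrite /c -mulrA ler_pM2l //.
  exact: (@sum_closed_nbhd_le _ _ e d).
have c_ge0 : 0 <= c by rewrite ltW // (lt_trans Cs_gt0).
split; first exact: (contract_dist_inf_eq0 d_ge0 d_contract c_lt1).
move=> k [_ far]; apply: le_lt_trans (contract_far_le d_ge0 c_ge0 d_contract e_sym d_le far) _.
have -> : X * c ^+ k / (1 - c) = c ^+ k * (X / (1 - c)) by rewrite mulrAC mulrC.
rewrite ltr_pM2l ?exprn_gt0 ?(lt_trans Cs_gt0) // ltr_pM2l //.
rewrite ltf_pV2 ?posrE ?subr_gt0 //; lra.
Qed.
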